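(* Let $g\ge2$, let $q_i(x,y)=a_ix^2+2b_ixy+c_iy^2$ ($i=1,\ldots,g$) be integer binary quadratic forms, irreducible over the integers, with $a_i\equiv1\pmod4$, and let $D:=\prod_{p\le2g}p\prod_{k}a_kc_k\delta_k\prod_{i<j}\operatorname{Res}(q_i,q_j)$, assumed nonzero. Then for every prime $p$ and all non-negative integers $e_1,\ldots,e_g$, $$\rho^*(p^{e_1},\ldots,p^{e_g})\ll p^{\max(e_1,\ldots,e_g)},$$ with implied constant depending only on the forms; and if $p\nmid D$ then $\rho^*(p^{e_1},\ldots,p^{e_g})=0$ whenever $e_i>0$ and $e_j>0$ for some $i\ne j$.
   Context: $\delta_k$ is the discriminant of $q_k$ and $\operatorname{Res}$ the resultant. For positive integers $d_1,\ldots,d_g$: $\Lambda_{\mathbf d}:=\{\mathbf x\in\mathbb Z^2:d_i\mid q_i(\mathbf x)\ \forall i\}$, $\Lambda^*_{\mathbf d}:=\{\mathbf x\in\Lambda_{\mathbf d}:\gcd(x_1,x_2,d_1\cdots d_g)=1\}$, and $\rho^*(\mathbf d):=\#(\Lambda^*_{\mathbf d}\cap[0,d_1\cdots d_g)^2)$. *)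

From HB Require Import structures.
From mathcomp Require Import all_boot all_order all_algebra.
From mathcomp Require Import mpoly.
Set Implicit Arguments. Unset Strict Implicit. Unset Printing Implicit Defensive.
Import Order.TTheory GRing.Theory Num.Theory.
Local Open Scope ring_scope.

Definition qform (a b c x y : int) : int := a * x ^+ 2 + 2 * b * x * y + c * y ^+ 2.

Definition qform_poly (a b c : int) : {mpoly int[2]} :=
  a%:MP * 'X_0 ^+ 2 + (2 * b)%:MP * 'X_0 * 'X_1 + c%:MP * 'X_1 ^+ 2.

Definition irreducible_Z (p : {mpoly int[2]}) : Prop :=
  p != 0 /\ p \isn't a GRing.unit /\
  forall f g : {mpoly int[2]}, p = f * g -> (f \is a GRing.unit) \/ (g \is a GRing.unit).

Definition qdisc (a b c : int) : int := (2 * b) ^+ 2 - 4 * a * c.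

(* Resultant of the binary forms a1 x^2 + B1 x y + c1 y^2 and
   a2 x^2 + B2 x y + c2 y^2 (B = 2b), i.e. the determinant of the
   Sylvester matrix: (a1c2-a2c1)^2 - (a1B2-a2B1)(B1c2-B2c1). *)
Definition qres (a1 b1 c1 a2 b2 c2 : int) : int :=
  let B1 := 2 * b1 in let B2 := 2 * b2 in
  (a1 * c2 - a2 * c1) ^+ 2 - (a1 * B2 - a2 * B1) * (B1 * c2 - B2 * c1).

Definition bigD (g : nat) (a b c : 'I_g -> int) : int :=
  (\prod_(p < (2 * g).+1 | prime p) p)%N%:Z
  * (\prod_(k < g) (a k * c k * qdisc (a k) (b k) (c k)))
  * (\prod_(i < g) \prod_(j < g | (i < j)%N)
        qres (a i) (b i) (c i) (a j) (b j) (c j)).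

Definition in_Lambda_star (g : nat) (a b c : 'I_g -> int) (d : 'I_g -> nat)
    (x1 x2 : int) : bool :=
  [forall i : 'I_g, ((d i)%:Z %| qform (a i) (b i) (c i) x1 x2)%Z]
  && (gcdz (gcdz x1 x2) (\prod_(i < g) d i)%N%:Z == 1).

Definition rho_star (g : nat) (a b c : 'I_g -> int) (d : 'I_g -> nat) : nat :=
  let N := (\prod_(i < g) d i)%N in
  #|[set x : 'I_N * 'I_N |
      in_Lambda_star a b c d (nat_of_ord x.1)%:Z (nat_of_ord x.2)%:Z]|.

From HB Require Import structures.
From mathcomp Require Import all_boot all_order all_algebra.
From mathcomp Require Import mpoly.
From mathcomp Require Import ring.
Set Implicit Arguments. Unset Strict Implicit. Unset Printing Implicit Defensive.
Import Order.TTheory GRing.Theory Num.Theory.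
Local Open Scope ring_scope.

(* Fix p, and let M = e_i be the largest exponent, q = q_i.  If p does not divide y and
   x, x0 are roots of q(., y) modulo p^M, then p^M | (x - x0)(a(x + x0) + 2by); when p^m
   divides both factors, p^2m divides (2a x0 + 2by)^2 - 4a q(x0, y) = δ y^2, so p^M
   divides δ(x - x0) or δ(a(x + x0) + 2by).  Hence the roots lie in at most |δ| + |δa|
   classes modulo p^M, and a box [0, N)^2 with N = p^M T contains O(T^2 p^M) primitive
   zeros of q modulo p^M.  A primitive common zero of q_i, q_j modulo p^k forces
   p^k | Res(q_i, q_j), because Res x^3 and Res y^3 lie in the ideal (q_i, q_j).
   This bounds T = prod_(j <> i) p^e_j by prod_(j <> i) |Res(q_i, q_j)|, and, when two
   exponents are positive, makes p divide D. *)

Lemma pexp_dvdn_mul (p M U W : nat) : prime p -> (p ^ M %| U * W)%N ->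
  exists2 al, (al <= M)%N & (p ^ al %| U)%N && (p ^ (M - al) %| W)%N.
Proof.
move=> p_pr; elim: M U W => [|M IH] U W dvdUW.
  by exists 0%N => //; rewrite !expn0 !dvd1n.
have : (p %| U * W)%N by apply: dvdn_trans dvdUW; rewrite dvdn_exp.
rewrite Euclid_dvdM // => /orP[] /dvdnP[k eq_k]; subst.
- have [al alM /andP[dvdk dvdW]] : exists2 al, (al <= M)%N &
      (p ^ al %| k)%N && (p ^ (M - al) %| W)%N.
    by apply: IH; move: dvdUW; rewrite expnSr mulnAC dvdn_pmul2r ?prime_gt0.
  by exists al.+1; rewrite // subSS dvdW expnSr dvdn_mul.
- have [al alM /andP[dvdU dvdk]] : exists2 al, (al <= M)%N &
      (p ^ al %| U)%N && (p ^ (M - al) %| k)%N.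
    by apply: IH; move: dvdUW; rewrite expnSr mulnA dvdn_pmul2r ?prime_gt0.
  by exists al; rewrite ?leqW // dvdU subSn // expnSr dvdn_mul.
Qed.

Lemma pexp_dvdz_mul (p M : nat) (u w : int) : prime p ->
  ((p ^ M)%N%:Z %| u * w)%Z ->
  exists2 al, (al <= M)%N & ((p ^ al)%N%:Z %| u)%Z && ((p ^ (M - al))%N%:Z %| w)%Z.
Proof. by move=> p_pr; rewrite dvdzE abszM => /(pexp_dvdn_mul p_pr). Qed.

Lemma dvdz_pexp2l (p k l : nat) : (k <= l)%N -> ((p ^ k)%N%:Z %| (p ^ l)%N%:Z)%Z.
Proof. by move=> le_kl; rewrite dvdzE /= dvdn_exp2l. Qed.

Lemma pexp_dvdz_mulXr (p k n : nat) (z y : int) : prime p -> ~~ (p %| `|y|)%N ->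
  ((p ^ k)%N%:Z %| z * y ^+ n)%Z = ((p ^ k)%N%:Z %| z)%Z.
Proof.
move=> p_pr p_y; rewrite Gauss_dvdzl // coprimezE /= abszX.
by apply/coprimeXl/coprimeXr; rewrite prime_coprime.
Qed.

Lemma qform_roots_mod_pexp (p M : nat) (a b c x x0 y : int) :
  prime p -> ~~ (p %| `|y|)%N ->
  ((p ^ M)%N%:Z %| qform a b c x y)%Z -> ((p ^ M)%N%:Z %| qform a b c x0 y)%Z ->
  ((p ^ M)%N%:Z %| qdisc a b c * (x - x0))%Z \/
  ((p ^ M)%N%:Z %| qdisc a b c * (a * (x + x0) + 2 * b * y))%Z.
Proof.
move=> p_pr p_y qx qx0; set u := x - x0; set w := a * (x + x0) + 2 * b * y.
have [al alM /andP[dvd_u dvd_w]] : exists2 al, (al <= M)%N &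
    ((p ^ al)%N%:Z %| u)%Z && ((p ^ (M - al))%N%:Z %| w)%Z.
  apply: pexp_dvdz_mul => //; have -> : u * w = qform a b c x y - qform a b c x0 y.
    by rewrite /u /w /qform; ring.
  by rewrite rpredB.
set m := minn al (M - al).
have dvd_m_u : ((p ^ m)%N%:Z %| u)%Z by apply: dvdz_trans dvd_u; apply/dvdz_pexp2l/geq_minl.
have dvd_m_w : ((p ^ m)%N%:Z %| w)%Z by apply: dvdz_trans dvd_w; apply/dvdz_pexp2l/geq_minr.
have le_mm_M : (m + m <= M)%N.
  by apply: leq_trans (leq_add (geq_minl _ _) (geq_minr _ _)) _; rewrite subnKC.
have dvd_disc : ((p ^ m)%N%:Z %| qdisc a b c)%Z.
  apply: (dvdz_trans (dvdz_pexp2l p (leq_addr m m))).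
  rewrite -(pexp_dvdz_mulXr _ 2 _ p_pr p_y).
  have -> : qdisc a b c * y ^+ 2 = (w - a * u) ^+ 2 - 4 * a * qform a b c x0 y.
    by rewrite /u /w /qdisc /qform; ring.
  rewrite rpredB //; last by rewrite dvdz_mull // (dvdz_trans (dvdz_pexp2l p le_mm_M)).
  by rewrite expnD PoszM expr2 dvdz_mul // rpredB // dvdz_mull.
case: (leqP al (M - al)) => [le_al|lt_al]; [right | left].
- rewrite -(subnK alM) expnD PoszM mulrC dvdz_mul //.
  by move: dvd_disc; rewrite /m (minn_idPl le_al).
- rewrite -(subnKC alM) expnD PoszM mulrC dvdz_mul //.
  by move: dvd_disc; rewrite /m (minn_idPr (ltnW lt_al)).
Qed.

Lemma sum_modn_eq_le (N Q r : nat) : (0 < Q)%N -> (Q %| N)%N ->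
  (\sum_(x < N) ((x %% Q == r)%N : nat) <= N %/ Q)%N.
Proof.
move=> Q_gt0 dvdQN.
rewrite -(big_mkord xpredT (fun x => ((x %% Q == r)%N : nat))) /index_iota subn0.
have -> : (\sum_(i <- iota 0 N) ((i %% Q == r)%N : nat)
           = count (fun x => x %% Q == r) (iota 0 N))%N.
  by rewrite -sumn_count sumnE big_map.
rewrite -size_filter -(size_map (divn^~ Q)) -(size_iota 0 (N %/ Q)).
apply: uniq_leq_size.
  rewrite map_inj_in_uniq ?filter_uniq ?iota_uniq // => x z.
  rewrite !mem_filter => /andP[/eqP xr _] /andP[/eqP zr _] eq_div.
  by rewrite (divn_eq x Q) (divn_eq z Q) eq_div xr zr.
move=> z /mapP[x]; rewrite mem_filter mem_iota => /andP[_ /andP[_ xN]] ->.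
by rewrite mem_iota /= ltn_divLR // divnK.
Qed.

Lemma sum_dvdz_linear_le (N P : nat) (K L : int) : K != 0 -> (0 < P)%N -> (P %| N)%N ->
  (\sum_(x < N) ((P%:Z %| (K * x%:Z + L)%R)%Z : nat) <= `|K| * (N %/ P))%N.
Proof.
move=> K_neq0 P_gt0 dvdPN.
have [x1 sol_x1 | no_sol] :=
  pickP (fun x : 'I_N => (P%:Z %| (K * x%:Z + L)%R)%Z); last first.
  by rewrite big1 // => x _; rewrite no_sol.
set G := gcdn `|K| P; set Q := (P %/ G)%N.
have PQG : P = (Q * G)%N by rewrite divnK ?dvdn_gcdr.
have Q_gt0 : (0 < Q)%N by move: P_gt0; rewrite PQG muln_gt0 => /andP[].
have sol_mod (x : 'I_N) : (P%:Z %| (K * x%:Z + L)%R)%Z -> (x %% Q == x1 %% Q)%N.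
  move=> sol_x; have : (P%:Z %| (K * (x%:Z - x1%:Z))%R)%Z.
    have -> : K * (x%:Z - x1%:Z) = (K * x%:Z + L) - (K * x1%:Z + L) by ring.
    exact: rpredB.
  rewrite dvdzE abszM /= => dvdP_Kv.
  have : (Q * G %| G * `|x%:Z - x1%:Z|)%N.
    by rewrite -PQG /G muln_gcdl dvdn_gcd dvdP_Kv dvdn_mulr.
  rewrite mulnC dvdn_pmul2l ?gcdn_gt0 ?P_gt0 ?orbT // => dvdQ.
  have : (Q%:Z %| x%:Z - x1%:Z)%Z by rewrite dvdzE.
  by rewrite -eqz_mod_dvd !modz_nat => /eqP[->].
apply: (@leq_trans (\sum_(x < N) ((x %% Q == x1 %% Q)%N : nat))).
  by apply: leq_sum => x _; case: (boolP (P%:Z %| _)%Z) => // /sol_mod ->.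
apply: leq_trans (sum_modn_eq_le _ Q_gt0 _) _.
  by apply: dvdn_trans dvdPN; rewrite PQG dvdn_mulr.
have -> : (N %/ Q = N %/ P * G)%N.
  by rewrite -{1}(divnK dvdPN) PQG mulnA mulnAC mulnK.
by rewrite mulnC leq_mul2r dvdn_leq ?absz_gt0 ?dvdn_gcdl ?orbT.
Qed.

Definition qroot_bound (a b c : int) : nat := `|qdisc a b c| + `|qdisc a b c * a|.

Lemma sum_qform_roots_le (p M N : nat) (a b c y : int) :
  prime p -> ~~ (p %| `|y|)%N -> a != 0 -> qdisc a b c != 0 -> (p ^ M %| N)%N ->
  (\sum_(x < N) (((p ^ M)%N%:Z %| qform a b c x%:Z y)%Z : nat)
     <= qroot_bound a b c * (N %/ p ^ M))%N.
Proof.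
move=> p_pr p_y a_neq0 disc_neq0 dvdN.
have [x0 root_x0 | no_root] :=
    pickP (fun x : 'I_N => ((p ^ M)%N%:Z %| qform a b c x%:Z y)%Z);
  last by rewrite big1 // => x _; rewrite no_root.
set d := qdisc a b c.
apply: (@leq_trans (\sum_(x < N)
    ((((p ^ M)%N%:Z %| (d * x%:Z + - (d * x0%:Z))%R)%Z : nat)
     + (((p ^ M)%N%:Z %| ((d * a) * x%:Z + d * (a * x0%:Z + 2 * b * y))%R)%Z : nat)))).
  apply: leq_sum => x _; case: (boolP (_ %| _)%Z) => // root_x.
  have [dvd1|dvd2] := qform_roots_mod_pexp p_pr p_y root_x root_x0.
    by move: dvd1; rewrite -/d mulrBr => ->.
  have -> : d * a * x%:Z + d * (a * x0%:Z + 2 * b * y)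
            = d * (a * (x%:Z + x0%:Z) + 2 * b * y) by ring.
  by rewrite dvd2 addn1.
rewrite big_split /= mulnDl leq_add //; apply: sum_dvdz_linear_le;
  by rewrite ?mulf_neq0 ?expn_gt0 ?prime_gt0.
Qed.

Lemma qform_swap (a b c x y : int) : qform a b c x y = qform c b a y x.
Proof. by rewrite /qform; ring. Qed.

Lemma qdisc_swap (a b c : int) : qdisc c b a = qdisc a b c.
Proof. by rewrite /qdisc; ring. Qed.

Lemma sum_qform_roots_prime_y_le (p M N : nat) (a b c : int) :
  prime p -> a != 0 -> qdisc a b c != 0 -> (p ^ M %| N)%N ->
  (\sum_(y < N) \sum_(x < N)
      (~~ (p %| y)%N && ((p ^ M)%N%:Z %| qform a b c x%:Z y%:Z)%Z : nat)
     <= N * (qroot_bound a b c * (N %/ p ^ M)))%N.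
Proof.
move=> p_pr a_neq0 disc_neq0 dvdN.
rewrite -[X in (_ <= X * _)%N]card_ord -sum_nat_const; apply: leq_sum => y _.
have [p_y | p_ny] := boolP (p %| y)%N; first by rewrite big1.
exact: sum_qform_roots_le.
Qed.

Lemma sum_primitive_qform_roots_le (p M N : nat) (a b c : int) :
  prime p -> a != 0 -> c != 0 -> qdisc a b c != 0 -> (p ^ M %| N)%N ->
  (\sum_(x < N) \sum_(y < N) ((~~ (p %| x)%N || ~~ (p %| y)%N)
      && ((p ^ M)%N%:Z %| qform a b c x%:Z y%:Z)%Z : nat)
     <= N * ((qroot_bound a b c + qroot_bound c b a) * (N %/ p ^ M)))%N.
Proof.
move=> p_pr a_neq0 c_neq0 disc_neq0 dvdN.
have disc_neq0' : qdisc c b a != 0 by rewrite qdisc_swap.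
have le_y := sum_qform_roots_prime_y_le p_pr a_neq0 disc_neq0 dvdN.
have le_x := sum_qform_roots_prime_y_le p_pr c_neq0 disc_neq0' dvdN.
rewrite mulnDl mulnDr; apply: leq_trans (leq_add le_y le_x).
rewrite [X in (_ <= X + _)%N]exchange_big -big_split; apply: leq_sum => x _.
rewrite -big_split; apply: leq_sum => y _; rewrite /= -qform_swap.
by case: (p %| x)%N; case: (p %| y)%N; case: (_ %| _)%Z.
Qed.

Lemma qres_sym (a1 b1 c1 a2 b2 c2 : int) :
  qres a1 b1 c1 a2 b2 c2 = qres a2 b2 c2 a1 b1 c1.
Proof. by rewrite /qres; ring. Qed.

(* [Res y^3] and [Res x^3] lie in the ideal generated by the two forms. *)
Lemma pexp_dvdz_qres (p k : nat) (a1 b1 c1 a2 b2 c2 x y : int) : prime p ->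
  ~~ ((p %| `|x|)%N && (p %| `|y|)%N) ->
  ((p ^ k)%N%:Z %| qform a1 b1 c1 x y)%Z -> ((p ^ k)%N%:Z %| qform a2 b2 c2 x y)%Z ->
  ((p ^ k)%N%:Z %| qres a1 b1 c1 a2 b2 c2)%Z.
Proof.
move=> p_pr p_xy q1 q2.
set B1 := 2 * b1; set B2 := 2 * b2.
have dvd_y : ((p ^ k)%N%:Z %| qres a1 b1 c1 a2 b2 c2 * y ^+ 3)%Z.
  set m := a1 * B2 - a2 * B1; set n := a1 * c2 - a2 * c1.
  have -> : qres a1 b1 c1 a2 b2 c2 * y ^+ 3
      = (a2 * m * x + (m * B2 - a2 * n) * y) * qform a1 b1 c1 x y
        + (- (a1 * m) * x + (a1 * n - B1 * m) * y) * qform a2 b2 c2 x y.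
    by rewrite /qres /qform /m /n /B1 /B2; ring.
  by rewrite rpredD // dvdz_mull.
have dvd_x : ((p ^ k)%N%:Z %| qres a1 b1 c1 a2 b2 c2 * x ^+ 3)%Z.
  set m := c1 * B2 - c2 * B1; set n := c1 * a2 - c2 * a1.
  have -> : qres a1 b1 c1 a2 b2 c2 * x ^+ 3
      = (c2 * m * y + (m * B2 - c2 * n) * x) * qform a1 b1 c1 x y
        + (- (c1 * m) * y + (c1 * n - B1 * m) * x) * qform a2 b2 c2 x y.
    by rewrite /qres /qform /m /n /B1 /B2; ring.
  by rewrite rpredD // dvdz_mull.
by case/nandP: p_xy => [p_x | p_y];
  [rewrite -(pexp_dvdz_mulXr _ 3 _ p_pr p_x) | rewrite -(pexp_dvdz_mulXr _ 3 _ p_pr p_y)].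
Qed.

Lemma dvdz_neq0 (x y : int) : (x %| y)%Z -> y != 0 -> x != 0.
Proof. by move=> dvd_xy; apply: contraNneq => x0; rewrite -dvd0z -x0. Qed.

Section FormFamily.

Variables (g : nat) (a b c : 'I_g -> int).

Definition qres_prod (i : 'I_g) : nat :=
  \prod_(j < g | j != i) `|qres (a i) (b i) (c i) (a j) (b j) (c j)|.

Definition rho_star_const (i : 'I_g) : nat :=
  (qroot_bound (a i) (b i) (c i) + qroot_bound (c i) (b i) (a i)) * qres_prod i ^ 2.

Lemma coef_dvd_bigD (k : 'I_g) :
  (a k * c k * qdisc (a k) (b k) (c k) %| bigD a b c)%Z.
Proof. by rewrite /bigD dvdz_mulr // dvdz_mull // (bigD1 k) //= dvdz_mulr. Qed.

Lemma qres_dvd_bigD (i j : 'I_g) : i != j ->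
  (qres (a i) (b i) (c i) (a j) (b j) (c j) %| bigD a b c)%Z.
Proof.
have dvd_lt (k l : 'I_g) : (k < l)%N ->
    (qres (a k) (b k) (c k) (a l) (b l) (c l) %| bigD a b c)%Z.
  move=> lt_kl; rewrite /bigD dvdz_mull // (bigD1 k) //= dvdz_mulr //.
  by rewrite (bigD1 l) //= dvdz_mulr.
by rewrite neq_ltn => /orP[/dvd_lt // | /dvd_lt]; rewrite qres_sym.
Qed.

Lemma rho_star_le_prod_sq (d : 'I_g -> nat) :
  (rho_star a b c d <= (\prod_(i < g) d i) ^ 2)%N.
Proof. by apply: leq_trans (max_card _) _; rewrite card_prod card_ord. Qed.

Section PrimePowers.

Variables (p : nat) (e : 'I_g -> nat).
Hypothesis p_pr : prime p.

Local Notation pe := (fun i => (p ^ e i)%N).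
Local Notation N := (\prod_(i < g) p ^ e i)%N.

Lemma in_Lambda_star_pexp_coprime (i : 'I_g) (x y : nat) : (0 < e i)%N ->
  in_Lambda_star a b c pe x%:Z y%:Z -> ~~ ((p %| x)%N && (p %| y)%N).
Proof.
move=> e_gt0 /andP[_ /eqP gcd1]; apply/negP => /andP[p_x p_y].
have p_N : (p %| N)%N by rewrite (bigD1 i) //= dvdn_mulr // dvdn_exp.
have : (p%:Z %| gcdz (gcdz x%:Z y%:Z) N%:Z)%Z by rewrite !dvdz_gcd !dvdzE /= p_x p_y.
by rewrite gcd1 dvdzE /= dvdn1 => /eqP p1; move: p_pr; rewrite p1.
Qed.

Lemma in_Lambda_star_pexp_dvd_qres (i j : 'I_g) (k x y : nat) :
  (0 < e i)%N -> (k <= e i)%N -> (k <= e j)%N -> in_Lambda_star a b c pe x%:Z y%:Z ->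
  ((p ^ k)%N%:Z %| qres (a i) (b i) (c i) (a j) (b j) (c j))%Z.
Proof.
move=> e_gt0 le_ki le_kj xy_in; have p_xy := in_Lambda_star_pexp_coprime e_gt0 xy_in.
case/andP: xy_in => /forallP q_dvd _.
apply: (pexp_dvdz_qres (x := x%:Z) (y := y%:Z) p_pr p_xy).
  exact: dvdz_trans (dvdz_pexp2l p le_ki) (q_dvd i).
exact: dvdz_trans (dvdz_pexp2l p le_kj) (q_dvd j).
Qed.

Lemma rho_star_pexp_le_roots (i : 'I_g) : (0 < e i)%N ->
  (rho_star a b c pe <= \sum_(x < N) \sum_(y < N) ((~~ (p %| x)%N || ~~ (p %| y)%N)
      && ((p ^ e i)%N%:Z %| qform (a i) (b i) (c i) x%:Z y%:Z)%Z : nat))%N.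
Proof.
move=> e_gt0; rewrite /rho_star -sum1_card pair_big /= big_mkcond /=.
apply: leq_sum => -[x y] _; rewrite inE /=.
case xy_in: (in_Lambda_star _ _ _ _ _ _) => //.
have := in_Lambda_star_pexp_coprime e_gt0 xy_in; rewrite -negb_and => ->.
by case/andP: xy_in => /forallP/(_ i) ->.
Qed.

Lemma rho_star_pexp_eq0 (i j : 'I_g) : ~~ (p%:Z %| bigD a b c)%Z ->
  i != j -> (0 < e i)%N -> (0 < e j)%N -> rho_star a b c pe = 0%N.
Proof.
move=> p_nD ij e_gt0 f_gt0.
case: (posnP (rho_star a b c pe)) => // /card_gt0P [[x y]]; rewrite inE /= => xy_in.
have := in_Lambda_star_pexp_dvd_qres e_gt0 e_gt0 f_gt0 xy_in.
by rewrite expn1 => p_qres; rewrite (dvdz_trans p_qres (qres_dvd_bigD ij)) in p_nD.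
Qed.

Hypothesis bigD_neq0 : bigD a b c != 0.

Lemma prod_pexp_le_qres_prod (i : 'I_g) (x y : nat) :
  (forall j, e j <= e i)%N -> (0 < e i)%N -> in_Lambda_star a b c pe x%:Z y%:Z ->
  (\prod_(j < g | j != i) p ^ e j <= qres_prod i)%N.
Proof.
move=> e_le e_gt0 xy_in; apply: leq_prod => j ji.
have qres_neq0 : qres (a i) (b i) (c i) (a j) (b j) (c j) != 0.
  by apply: dvdz_neq0 (qres_dvd_bigD _) bigD_neq0; rewrite eq_sym.
have := in_Lambda_star_pexp_dvd_qres e_gt0 (e_le j) (leqnn _) xy_in.
by rewrite dvdzE => /dvdn_leq; apply; rewrite absz_gt0.
Qed.

Lemma rho_star_pexp_le (i : 'I_g) : (forall j, e j <= e i)%N -> (0 < e i)%N ->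
  (rho_star a b c pe <= rho_star_const i * p ^ e i)%N.
Proof.
move=> e_le e_gt0.
case: (posnP (rho_star a b c pe)) => [-> // | /card_gt0P [[x y]]].
rewrite inE /= => xy_in.
have [a_neq0 c_neq0 disc_neq0] :
    [/\ a i != 0, c i != 0 & qdisc (a i) (b i) (c i) != 0].
  have := dvdz_neq0 (coef_dvd_bigD i) bigD_neq0.
  by rewrite !mulf_eq0 !negb_or => /andP[/andP[-> ->] ->].
set T := (\prod_(j < g | j != i) p ^ e j)%N.
have NT : N = (p ^ e i * T)%N by rewrite (bigD1 i).
have le_T : (T <= qres_prod i)%N := prod_pexp_le_qres_prod e_le e_gt0 xy_in.
apply: leq_trans (rho_star_pexp_le_roots e_gt0) _.
apply: leq_trans (sum_primitive_qform_roots_le p_pr a_neq0 c_neq0 disc_neq0 _) _.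
  by rewrite NT dvdn_mulr.
rewrite NT mulKn ?expn_gt0 ?prime_gt0 // /rho_star_const.
set K := (qroot_bound _ _ _ + _)%N.
have -> : (p ^ e i * T * (K * T) = K * (T * T) * p ^ e i)%N by ring.
by rewrite leq_mul2r leq_mul2l leq_mul ?orbT.
Qed.

End PrimePowers.
End FormFamily.

Theorem lemma2p3 (g : nat) (a b c : 'I_g -> int)
  (hg : (2 <= g)%N)
  (hirr : forall i, irreducible_Z (qform_poly (a i) (b i) (c i)))
  (ha : forall i, (a i = 1 %[mod 4])%Z)
  (hD : bigD a b c != 0) :
  (exists C : nat, forall (p : nat) (e : 'I_g -> nat), prime p ->
     (rho_star a b c (fun i => (p ^ e i)%N) <= C * p ^ (\max_(i < g) e i))%N)
  /\
  (forall (p : nat) (e : 'I_g -> nat), prime p ->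
     ~~ (p%:Z %| bigD a b c)%Z ->
     (exists i j : 'I_g, [/\ i != j, (0 < e i)%N & (0 < e j)%N]) ->
     rho_star a b c (fun i => (p ^ e i)%N) = 0%N).
Proof.
split; last first.
  by move=> p e p_pr p_nD [i [j [ij e_gt0 f_gt0]]]; apply: rho_star_pexp_eq0 ij e_gt0 f_gt0.
(* the successor accounts for e = 0, where rho^* = 1 *)
exists (\sum_(i < g) rho_star_const a b c i).+1 => p e p_pr.
have [i max_i] : {i | \max_(j < g) e j = e i}.
  by apply: bigop.eq_bigmax; rewrite card_ord ltnW.
have e_le j : (e j <= e i)%N by rewrite -max_i leq_bigmax.
rewrite max_i; have [e0 | e_gt0] := posnP (e i).
  have e_eq0 j : e j = 0%N by apply/eqP; rewrite -leqn0 -e0 e_le.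
  apply: leq_trans (rho_star_le_prod_sq _ _ _ _) _.
  by rewrite big1 => [|j _]; rewrite ?e_eq0 ?e0 ?muln1.
apply: leq_trans (rho_star_pexp_le p_pr hD e_le e_gt0) _.
by rewrite leq_mul2r ltnW ?orbT // ltnS (bigD1 i) //= leq_addr.
Qed.
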